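(* Let $\alpha_1\approx 0.24760367$ be the root in $[0,1]$ of $16\alpha^4+16\alpha^3-52\alpha^2+48\alpha-9=0$ and $\alpha_2\approx0.2797707433$ the root in $[0,1]$ of $8\alpha^4-8\alpha^3+8\alpha^2=1/2$, and let $\alpha_1\le\alpha\le\alpha_2$. If $(x,y)\in A_2$ and $G_\alpha^i(x,y)\in A_1$ for $i=1,2,3$, then $G_\alpha^4(x,y)\in A_2$; i.e., a point coming from $A_2$ remains in $A_1$ for at most $3$ consecutive steps.
   Context: Let $\tau:[0,1]\to[0,1]$ be the symmetric tent map, $\tau(x)=2x$ for $0\le x<1/2$ and $\tau(x)=2-2x$ for $1/2\le x\le 1$. For $0<\alpha<1$ define $G_\alpha:[0,1]^2\to[0,1]^2$ by $G_\alpha(x,y)=(y,\tau(\alpha y+(1-\alpha)x))$. Let $S(x,y)=\alpha y+(1-\alpha)x$, $A_1=\{(x,y)\in[0,1]^2: S(x,y)<1/2\}$ and $A_2=\{(x,y)\in[0,1]^2: S(x,y)\ge 1/2\}$. *)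

From Stdlib Require Import Reals Lra.
Open Scope R_scope.

Definition tau (x : R) : R := if Rlt_dec x (1/2) then 2 * x else 2 - 2 * x.

Definition S (alpha : R) (p : R * R) : R := alpha * snd p + (1 - alpha) * fst p.

Definition G (alpha : R) (p : R * R) : R * R := (snd p, tau (S alpha p)).

Fixpoint Giter (alpha : R) (n : nat) (p : R * R) : R * R :=
  match n with
  | O => p
  | Datatypes.S k => G alpha (Giter alpha k p)
  end.

Definition in_square (p : R * R) : Prop :=
  0 <= fst p <= 1 /\ 0 <= snd p <= 1.

Definition A_1 (alpha : R) (p : R * R) : Prop := in_square p /\ S alpha p < 1/2.
Definition A_2 (alpha : R) (p : R * R) : Prop := in_square p /\ S alpha p >= 1/2.

(* Starting in A_2 and then staying three steps in A_1 fixes the tent-map branches along the orbit,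
   so S(G^4(x,y)) is an explicit affine function of (x - 1) and y whose coefficients are polynomials
   in alpha. On [6/25, 3/10], which contains [alpha_1, alpha_2], the coefficient of (x - 1) is
   nonpositive, that of y nonnegative and the constant term at least 1/2, so S(G^4(x,y)) >= 1/2. *)
From Stdlib Require Import Reals Lra Psatz.
Open Scope R_scope.

Lemma tau_lt (v : R) : v < 1/2 -> tau v = 2 * v.
Proof. intros; unfold tau; destruct (Rlt_dec v (1/2)); lra. Qed.

Lemma tau_ge (v : R) : v >= 1/2 -> tau v = 2 - 2 * v.
Proof. intros; unfold tau; destruct (Rlt_dec v (1/2)); lra. Qed.

Lemma tau_in_unit (v : R) : 0 <= v <= 1 -> 0 <= tau v <= 1.
Proof. intros; unfold tau; destruct (Rlt_dec v (1/2)); lra. Qed.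

Lemma S_in_unit (alpha : R) (p : R * R) :
  0 <= alpha <= 1 -> in_square p -> 0 <= S alpha p <= 1.
Proof. unfold in_square, S; intros Ha [Hx Hy]; nra. Qed.

Lemma G_in_square (alpha : R) (p : R * R) :
  0 <= alpha <= 1 -> in_square p -> in_square (G alpha p).
Proof.
  intros Ha Hp; split; [apply Hp |].
  apply tau_in_unit, S_in_unit; assumption.
Qed.

Definition S4_const (a : R) : R := 4*a - 8*a^2 + 28*a^3 - 24*a^4 + 16*a^5.
Definition S4_coef_x (a : R) : R := -4 + 12*a - 36*a^2 + 52*a^3 - 40*a^4 + 16*a^5.
Definition S4_coef_y (a : R) : R := 4*a - 8*a^2 - 12*a^3 + 16*a^4 - 16*a^5.

Lemma S_Giter4_branches (alpha x y : R) :
  S alpha (x, y) >= 1/2 ->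
  S alpha (Giter alpha 1 (x, y)) < 1/2 ->
  S alpha (Giter alpha 2 (x, y)) < 1/2 ->
  S alpha (Giter alpha 3 (x, y)) < 1/2 ->
  S alpha (Giter alpha 4 (x, y)) =
    S4_const alpha + S4_coef_x alpha * (x - 1) + S4_coef_y alpha * y.
Proof.
  intros H0 H1 H2 H3; cbn [Giter] in *; unfold G in *.
  rewrite (tau_lt _ H3), (tau_lt _ H2), (tau_lt _ H1), (tau_ge _ H0) in *.
  unfold S, S4_const, S4_coef_x, S4_coef_y; cbn [fst snd]; ring.
Qed.

Section Coefficient_signs.

Variable a : R.
Hypothesis Ha : 6/25 <= a <= 3/10.

Lemma S4_coef_x_nonpos : S4_coef_x a <= 0.
Proof. unfold S4_coef_x; nra. Qed.

Lemma S4_coef_y_nonneg : 0 <= S4_coef_y a.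
Proof. unfold S4_coef_y; nra. Qed.

Lemma S4_const_ge_half : 1/2 <= S4_const a.
Proof. unfold S4_const; nra. Qed.

End Coefficient_signs.

Lemma alpha1_ge (a : R) : 0 <= a <= 1 ->
  16 * a ^ 4 + 16 * a ^ 3 - 52 * a ^ 2 + 48 * a - 9 = 0 -> 6/25 <= a.
Proof. intros Ha Hf; destruct (Rle_lt_dec (6/25) a); [assumption | nra]. Qed.

Lemma alpha2_le (a : R) : 0 <= a <= 1 ->
  8 * a ^ 4 - 8 * a ^ 3 + 8 * a ^ 2 = 1 / 2 -> a <= 3/10.
Proof. intros Ha Hf; destruct (Rle_lt_dec a (3/10)); [assumption | nra]. Qed.

Theorem proposition9 (alpha1 alpha2 alpha x y : R) :
  0 <= alpha1 <= 1 ->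
  16 * alpha1 ^ 4 + 16 * alpha1 ^ 3 - 52 * alpha1 ^ 2 + 48 * alpha1 - 9 = 0 ->
  0 <= alpha2 <= 1 ->
  8 * alpha2 ^ 4 - 8 * alpha2 ^ 3 + 8 * alpha2 ^ 2 = 1 / 2 ->
  alpha1 <= alpha <= alpha2 ->
  A_2 alpha (x, y) ->
  (forall i : nat, (1 <= i)%nat -> (i <= 3)%nat -> A_1 alpha (Giter alpha i (x, y))) ->
  A_2 alpha (Giter alpha 4 (x, y)).
Proof.
  intros H1r H1 H2r H2 Ha [[Hx Hy] H0] HA.
  pose proof (alpha1_ge _ H1r H1); pose proof (alpha2_le _ H2r H2).
  assert (Ha' : 6/25 <= alpha <= 3/10) by lra.
  destruct (HA 1%nat) as [_ H1']; try lia.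
  destruct (HA 2%nat) as [_ H2']; try lia.
  destruct (HA 3%nat) as [Hsq3 H3']; try lia.
  split.
  - apply G_in_square; [lra | exact Hsq3].
  - rewrite (S_Giter4_branches _ _ _ H0 H1' H2' H3').
    pose proof (S4_coef_x_nonpos _ Ha'); pose proof (S4_coef_y_nonneg _ Ha').
    pose proof (S4_const_ge_half _ Ha').
    cbn [fst snd] in Hx, Hy; nra.
Qed.
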